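(* Let $p\ge1$, $\tau\in(0,1)$, $c\in(0,+\infty)$, let $A:\mathbb{R}\to\mathbb{R}$ be convex, and let $\boldsymbol{x}\in\mathbb{R}^p$. For $\boldsymbol{w}\in\mathbb{R}^p$ define $\theta=\boldsymbol{w}^T\boldsymbol{x}$, $s_j=\mathrm{sgn}(w_j)$ (with $\mathrm{sgn}(0)=0$), $q_j=x_j(w_j+cs_j)$, $\theta_{j-}=\theta-q_j$, $\theta_{j+}=\theta+\frac{\tau}{1-\tau}q_j$, and $$\pi(\boldsymbol{w})=\tau\sum_{j=1}^{p}A(\theta_{j-})+(1-\tau)\sum_{j=1}^{p}A(\theta_{j+})-pA(\theta).$$ Then $\pi(\boldsymbol{w})\ge0$ for every $\boldsymbol{w}\in\mathbb{R}^p$.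
   Context: $\pi$ is the Shakeout regularizer of a generalized linear model with log-partition function $A$, Shakeout hyper-parameters $\tau$ and $c$, and feature vector $\boldsymbol{x}$. *)

From mathcomp Require Import all_boot all_order all_algebra.
Set Implicit Arguments. Unset Strict Implicit. Unset Printing Implicit Defensive.
Import Order.TTheory GRing.Theory Num.Theory.
Local Open Scope ring_scope.

Definition convex_fun (R : realFieldType) (A : R -> R) : Prop :=
  forall (a x y : R), 0 <= a -> a <= 1 ->
    A (a * x + (1 - a) * y) <= a * A x + (1 - a) * A y.

Definition theta (R : realFieldType) (p : nat) (w x : 'I_p -> R) : R :=
  \sum_(j < p) w j * x j.

Definition qj (R : realFieldType) (p : nat) (c : R) (w x : 'I_p -> R) (j : 'I_p) : R :=
  x j * (w j + c * Num.sg (w j)).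

Definition shakeout_reg (R : realFieldType) (p : nat) (A : R -> R) (tau c : R)
    (x w : 'I_p -> R) : R :=
  tau * (\sum_(j < p) A (theta w x - qj c w x j))
  + (1 - tau) * (\sum_(j < p) A (theta w x + tau / (1 - tau) * qj c w x j))
  - p%:R * A (theta w x).

From mathcomp Require Import all_boot all_order all_algebra.
From mathcomp Require Import ring.
Import Order.TTheory GRing.Theory Num.Theory.
Local Open Scope ring_scope.

(* The points theta - q_j and theta + tau / (1 - tau) q_j have weighted mean
   theta for the weights tau and 1 - tau, so by convexity each index j
   contributes a nonnegative amount to the regularizer, whatever q_j is. *)

Lemma convex_fun_le_centered_pair (R : realFieldType) (A : R -> R) (tau t q : R) :
  convex_fun A -> 0 <= tau -> tau < 1 ->
  A t <= tau * A (t - q) + (1 - tau) * A (t + tau / (1 - tau) * q).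
Proof.
move=> hA tau_ge0 tau_lt1.
have tau_neq1 : 1 - tau != 0 by rewrite subr_eq0 eq_sym (lt_eqF tau_lt1).
have mean_t : tau * (t - q) + (1 - tau) * (t + tau / (1 - tau) * q) = t by field.
by rewrite -{1}mean_t; apply: hA => //; apply: ltW.
Qed.

Lemma shakeout_regE (R : realFieldType) (p : nat) (A : R -> R) (tau c : R)
    (x w : 'I_p -> R) :
  shakeout_reg A tau c x w =
  \sum_(j < p) (tau * A (theta w x - qj c w x j)
               + (1 - tau) * A (theta w x + tau / (1 - tau) * qj c w x j)
               - A (theta w x)).
Proof.
rewrite /shakeout_reg sumrB big_split /= -!mulr_sumr.
by rewrite sumr_const card_ord mulr_natl.
Qed.

Theorem proposition2 (R : realFieldType) (p : nat) (hp : (1 <= p)%N)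
  (tau c : R) (htau0 : 0 < tau) (htau1 : tau < 1) (hc : 0 < c)
  (A : R -> R) (hA : convex_fun A) (x : 'I_p -> R) :
  forall w : 'I_p -> R, 0 <= shakeout_reg A tau c x w.
Proof.
move=> w; rewrite shakeout_regE; apply: sumr_ge0 => j _.
by rewrite subr_ge0 convex_fun_le_centered_pair // ltW.
Qed.
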